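(* Let $\mathcal{H}$ be a real Hilbert space, let $\Gamma\subseteq\mathbb{R}_{++}$ be nonempty, let $\beta\in[0,1)$ and let $(T_\gamma)_{\gamma\in\Gamma}$ be a family of $\beta$-contractions on $\mathcal{H}$ with $\operatorname{Fix}T_\gamma\neq\emptyset$ for all $\gamma\in\Gamma$. Let $(\mathcal{Q}_{\delta\leftarrow\gamma})_{\gamma,\delta\in\Gamma}$ be fixed-point relocators for $(T_\gamma)_{\gamma\in\Gamma}$ with Lipschitz constants $(\mathcal{L}_{\delta\leftarrow\gamma})_{\gamma,\delta\in\Gamma}$ in $[1,+\infty)$. Suppose that: (1) for each bounded subset $S\subseteq\bigcup_{\gamma\in\Gamma}(\operatorname{Fix}T_\gamma\times\{\gamma\})$ there exists $L>0$ with $\|\mathcal{Q}_{\delta\leftarrow\gamma}x-\mathcal{Q}_{\gamma\leftarrow\gamma}x\|\le L|\delta-\gamma|$ for all $\delta\in\Gamma$ and all $(x,\gamma)\in S$; (2) the map $\mathcal{H}\times\Gamma\to\mathcal{H}$, $(x,\gamma)\mapsto T_\gamma x$, is continuous; (3) $(\gamma_n)_{n\in\mathbb{N}}\subseteq\Gamma$ converges $R$-linearly to some $\gamma^*\in\Gamma$, and $\sum_{n\in\mathbb{N}}(\mathcal{L}_{\gamma_{n+1}\leftarrow\gamma_n}-1)<+\infty$. Given $x_0\in\mathcal{H}$, define $x_{n+1}:=\mathcal{Q}_{\gamma_{n+1}\leftarrow\gamma_n}T_{\gamma_n}x_n$ for all $n\in\mathbb{N}$. Then (i) $(\operatorname{dist}(x_n,\operatorname{Fix}T_{\gamma_n}))_{n\in\mathbb{N}}$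 converges $R$-linearly to zero, and (ii) $(x_n)_{n\in\mathbb{N}}$ and $(T_{\gamma_n}x_n)_{n\in\mathbb{N}}$ converge $R$-linearly to the same point in $\operatorname{Fix}T_{\gamma^*}$.
   Context: A $\beta$-contraction is a map $T$ with $\|Tx-Ty\|\le\beta\|x-y\|$ for all $x,y$, where $\beta\in[0,1)$. $\operatorname{Fix}T=\{x:Tx=x\}$, $\operatorname{dist}(x,C)=\inf_{y\in C}\|x-y\|$. Fixed-point relocators: given a nonempty $\Gamma\subseteq\mathbb{R}_{++}$ and operators $(T_\gamma)_{\gamma\in\Gamma}$ on $\mathcal{H}$, a family of operators $(\mathcal{Q}_{\delta\leftarrow\gamma})_{\delta,\gamma\in\Gamma}$ on $\mathcal{H}$ is called fixed-point relocators for $(T_\gamma)$ with Lipschitz constants $(\mathcal{L}_{\delta\leftarrow\gamma})$ in $[1,\infty)$ if: (a) for all $\gamma,\delta\in\Gamma$, the restriction of $\mathcal{Q}_{\delta\leftarrow\gamma}$ to $\operatorname{Fix}T_\gamma$ is a bijection from $\operatorname{Fix}T_\gamma$ onto $\operatorname{Fix}T_\delta$; (b) for all $\gamma\in\Gamma$ and $x\in\operatorname{Fix}T_\gamma$, $\delta\mapsto\mathcal{Q}_{\delta\leftarrow\gamma}x$ is continuous on $\Gamma$; (c) for all $\gamma,\delta,\epsilon\in\Gamma$ and $x\in\operatorname{Fix}T_\gamma$, $\mathcal{Q}_{\epsilon\leftarrow\delta}\mathcal{Q}_{\delta\leftarrow\gamma}x=\mathcal{Q}_{\epsilon\leftarrow\gamma}x$;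 (d) each $\mathcal{Q}_{\delta\leftarrow\gamma}$ is $\mathcal{L}_{\delta\leftarrow\gamma}$-Lipschitz. A sequence $(a_n)$ converges $R$-linearly to $a$ if there exist $C\ge0$, $r\in(0,1)$ with $\|a_n-a\|\le Cr^n$ for all $n$. *)

From HB Require Import structures.
From mathcomp Require Import all_boot all_order all_algebra.
From mathcomp Require Import all_classical all_reals all_analysis.
Set Implicit Arguments. Unset Strict Implicit. Unset Printing Implicit Defensive.
Import Order.TTheory GRing.Theory Num.Theory.
Import numFieldNormedType.Exports.
Local Open Scope classical_set_scope.
Local Open Scope ring_scope.

(* ip is an inner product on V inducing the norm of V.  A real Hilbert space
   is a complete normed space V (completeNormedModType R) equipped with such ip. *)
Definition is_inner_product_of_norm (R : realType) (V : normedModType R)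
  (ip : V -> V -> R) : Prop :=
  [/\ (forall x y, ip x y = ip y x),
      (forall (a : R) (x y z : V), ip (a *: x + y) z = a * ip x z + ip y z)
    & (forall x, ip x x = `|x| ^+ 2)].

Definition FixSet (T : Type) (f : T -> T) : set T := [set x | f x = x].

Definition dist_set (R : realType) (V : normedModType R) (x : V) (C : set V) : R :=
  inf [set `|x - y| | y in C].

Definition beta_contraction (R : realType) (V : normedModType R) (beta : R)
  (f : V -> V) : Prop :=
  forall x y, `|f x - f y| <= beta * `|x - y|.

Definition lipschitz_with (R : realType) (V : normedModType R) (L : R)
  (f : V -> V) : Prop :=
  forall x y, `|f x - f y| <= L * `|x - y|.

Definition Rlinear_cvg (R : realType) (V : normedModType R) (a : nat -> V)
  (l : V) : Prop :=
  exists (C r : R), [/\ 0 <= C, 0 < r, r < 1 &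
    forall n, `|a n - l| <= C * r ^+ n].

(* Fixed-point relocators (a)-(d) for the family T, with Lipschitz constants L;
   Q d g stands for Q_{d <- g}, L d g for L_{d <- g}. *)
Definition fixed_point_relocators (R : realType) (V : normedModType R)
  (Gam : set R) (T : R -> V -> V) (Q : R -> R -> V -> V) (L : R -> R -> R)
  : Prop :=
  [/\ (forall g d, Gam g -> Gam d -> set_bij (FixSet (T g)) (FixSet (T d)) (Q d g)),
      (forall g x, Gam g -> FixSet (T g) x ->
          {within Gam, continuous (fun d => Q d g x)}),
      (forall g d e x, Gam g -> Gam d -> Gam e -> FixSet (T g) x ->
          Q e d (Q d g x) = Q e g x)
    & (forall g d, Gam g -> Gam d -> 1 <= L d g /\ lipschitz_with (L d g) (Q d g))].

From HB Require Import structures.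
From mathcomp Require Import all_boot all_order all_algebra.
From mathcomp Require Import all_classical all_reals all_analysis.
From mathcomp Require Import ring lra.
Set Implicit Arguments. Unset Strict Implicit. Unset Printing Implicit Defensive.
Import Order.TTheory GRing.Theory Num.Theory.
Import numFieldNormedType.Exports.
Local Open Scope classical_set_scope.
Local Open Scope ring_scope.

(* Fix q in Fix T_g, where g is the limit of the parameters, and follow its
   relocated copies p_n := Q_{gamma_n <- g} q, which lie in Fix T_{gamma_n} and
   satisfy p_{n+1} = Q_{gamma_{n+1} <- gamma_n} p_n.  One step of the iteration
   contracts by beta and then relocates with Lipschitz constant L_n, so
   ||x_n - p_n|| <= (prod_{k<n} L_k) beta^n ||x_0 - p_0||, and the product is
   bounded by exp (sum_k (L_k - 1)) < +oo.  Hypothesis (1) applied to the single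
   point (q, g) gives ||p_n - q|| <= L0 |gamma_n - g|, which decays R-linearly;
   the triangle inequality then yields all claims, with limit q. *)

Section Rlinear_convergence.
Variables (R : realType) (V : normedModType R).

Lemma Rlinear_cvg_geometric (a : nat -> V) (l : V) (C b : R) :
  0 <= C -> 0 <= b -> b < 1 -> (forall n, `|a n - l| <= C * b ^+ n) ->
  Rlinear_cvg a l.
Proof.
move=> C0 b0 b1 aC; exists C, ((1 + b) / 2); split => //; [lra|lra|] => n.
apply: (le_trans (aC n)); rewrite ler_wpM2l // lerXn2r ?nnegrE //; lra.
Qed.

Lemma Rlinear_cvg_dominated (a : nat -> V) (l : V) (u : nat -> R) (ul : R) (M : R) :
  0 <= M -> (forall n, `|a n - l| <= M * `|u n - ul|) -> Rlinear_cvg u ul ->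
  Rlinear_cvg a l.
Proof.
move=> M0 aM [C [r [C0 r0 r1 uC]]].
apply: (@Rlinear_cvg_geometric _ _ (M * C) r); rewrite ?mulr_ge0 ?(ltW r0) // => n.
by rewrite -mulrA; apply: (le_trans (aM n)); rewrite ler_wpM2l.
Qed.

Lemma Rlinear_cvg_close (a c : nat -> V) (l : V) (C b : R) :
  0 <= C -> 0 <= b -> b < 1 -> (forall n, `|a n - c n| <= C * b ^+ n) ->
  Rlinear_cvg c l -> Rlinear_cvg a l.
Proof.
move=> C0 b0 b1 acC [D [r [D0 r0 r1 cD]]].
set s := Num.max b r.
have [bs rs] : b <= s /\ r <= s by rewrite !le_max !lexx orbT.
have s0 : 0 <= s := le_trans b0 bs.
apply: (@Rlinear_cvg_geometric _ _ (C + D) s) => //; first exact: addr_ge0.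
  by rewrite gt_max b1 r1.
move=> n; rewrite mulrDl -(subrKA (c n)).
apply: (le_trans (ler_normD _ _)); apply: lerD.
  by apply: (le_trans (acC n)); rewrite ler_wpM2l // lerXn2r ?nnegrE.
by apply: (le_trans (cD n)); rewrite ler_wpM2l // lerXn2r ?nnegrE ?(ltW r0).
Qed.

End Rlinear_convergence.

Lemma nneseries_partial_sums_bounded (R : realType) (a : nat -> R) :
  (forall k, 0 <= a k) -> (\sum_(0 <= k <oo) (a k)%:E < +oo)%E ->
  exists M, forall n, \sum_(0 <= k < n) a k <= M.
Proof.
move=> a0 fin_sum.
have sum_ge0 : (0 <= \sum_(0 <= k <oo) (a k)%:E)%E.
  by apply: nneseries_ge0 => k _ _; rewrite lee_fin.
exists (fine (\sum_(0 <= k <oo) (a k)%:E)) => n.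
rewrite -lee_fin fineK ?ge0_fin_numE // -sumEFin.
by apply: nneseries_lim_ge => k _ _; rewrite lee_fin.
Qed.

Lemma perturbed_geometric_le (R : realType) (e c : nat -> R) (b : R) :
  0 <= b -> 0 <= e 0%N -> (forall n, 1 <= c n) ->
  (forall n, e n.+1 <= c n * (b * e n)) ->
  forall n, e n <= expR (\sum_(0 <= k < n) (c k - 1)) * b ^+ n * e 0%N.
Proof.
move=> b0 e00 c1 eS; elim=> [|n IH]; first by rewrite big_geq // expR0 !mul1r.
have bound_ge0 : 0 <= b * (expR (\sum_(0 <= k < n) (c k - 1)) * b ^+ n * e 0%N).
  by rewrite !mulr_ge0 ?expR_ge0 ?exprn_ge0.
have c_le_expR : c n <= expR (c n - 1) by have := expR_ge1Dx (c n - 1); rewrite addrC subrK.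
apply: (le_trans (eS n)).
have -> : expR (\sum_(0 <= k < n.+1) (c k - 1)) * b ^+ n.+1 * e 0%N
    = expR (c n - 1) * (b * (expR (\sum_(0 <= k < n) (c k - 1)) * b ^+ n * e 0%N)).
  by rewrite big_nat_recr //= (expRD (\sum_(0 <= k < n) (c k - 1))) exprS; ring.
apply: (le_trans (y := c n * (b * (expR (\sum_(0 <= k < n) (c k - 1)) * b ^+ n * e 0%N)))).
  by rewrite ler_wpM2l ?(le_trans ler01) // ler_wpM2l.
by rewrite ler_wpM2r.
Qed.

Lemma dist_set_le (R : realType) (V : normedModType R) (x y : V) (C : set V) :
  C y -> 0 <= dist_set x C <= `|x - y|.
Proof.
move=> Cy; set D := [set `|x - z| | z in C].
have D0 : lbound D 0 by move=> _ [z _ <-].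
apply/andP; split; first by apply: lb_le_inf => //; exists `|x - y|, y.
by apply: (ge_inf (ex_intro _ 0 D0)); exists y.
Qed.

Section Relocators.
Variables (R : realType) (V : normedModType R) (Gam : set R).
Variables (T : R -> V -> V) (Q : R -> R -> V -> V) (L : R -> R -> R).
Hypothesis reloc : fixed_point_relocators Gam T Q L.

Lemma relocator_fix g d x :
  Gam g -> Gam d -> FixSet (T g) x -> FixSet (T d) (Q d g x).
Proof. by case: reloc => bij _ _ _ Gg Gd; case: (bij g d Gg Gd) => mapQ _ _ /mapQ. Qed.

(* Q_{g <- g} is idempotent on Fix T_g by (c) and injective there by (a). *)
Lemma relocator_id g x : Gam g -> FixSet (T g) x -> Q g g x = x.
Proof.
case: reloc => bij _ comp _ Gg Fx; have [mapQ injQ _] := bij g g Gg Gg.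
by apply: injQ; rewrite ?inE ?comp //; apply: mapQ.
Qed.

Lemma relocator_const_ge1 g d : Gam g -> Gam d -> 1 <= L d g.
Proof. by case: reloc => _ _ _ lipQ Gg Gd; case: (lipQ g d Gg Gd). Qed.

Variables (beta : R) (gam : nat -> R) (x p : nat -> V).
Hypotheses (beta_ge0 : 0 <= beta) (contrT : forall g, Gam g -> beta_contraction beta (T g)).
Hypotheses (gamP : forall n, Gam (gam n)) (pFix : forall n, FixSet (T (gam n)) (p n)).
Hypothesis pS : forall n, p n.+1 = Q (gam n.+1) (gam n) (p n).
Hypothesis xS : forall n, x n.+1 = Q (gam n.+1) (gam n) (T (gam n) (x n)).

Lemma relocated_iteration_step n :
  `|x n.+1 - p n.+1| <= L (gam n.+1) (gam n) * (beta * `|x n - p n|).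
Proof.
case: reloc => _ _ _ lipQ; have [L1 lipQn] := lipQ _ _ (gamP n) (gamP n.+1).
rewrite xS pS; apply: (le_trans (lipQn _ _)); rewrite ler_wpM2l ?(le_trans ler01) //.
by rewrite -[in leLHS](pFix n); apply: contrT.
Qed.

Lemma relocated_iteration_error M :
  (forall n, \sum_(0 <= k < n) (L (gam k.+1) (gam k) - 1) <= M) ->
  forall n, `|x n - p n| <= expR M * `|x 0%N - p 0%N| * beta ^+ n.
Proof.
move=> sumM n; have L1 k := relocator_const_ge1 (gamP k) (gamP k.+1).
have := perturbed_geometric_le beta_ge0 (normr_ge0 _) L1 relocated_iteration_step n.
move/le_trans; apply; rewrite mulrAC ler_wpM2r ?exprn_ge0 //.
by rewrite ler_wpM2r // ler_expR.
Qed.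

End Relocators.

Theorem corollary3p8 (R : realType) (V : completeNormedModType R)
  (ip : V -> V -> R) (Gam : set R) (beta : R)
  (T : R -> V -> V) (Q : R -> R -> V -> V) (L : R -> R -> R)
  (gam : nat -> R) (gstar : R) (x0 : V) (x : nat -> V) :
  is_inner_product_of_norm ip ->
  Gam !=set0 ->
  (forall g, Gam g -> 0 < g) ->
  0 <= beta -> beta < 1 ->
  (forall g, Gam g -> beta_contraction beta (T g)) ->
  (forall g, Gam g -> FixSet (T g) !=set0) ->
  fixed_point_relocators Gam T Q L ->
  (* (1) *)
  (forall S : set (V * R),
     S `<=` [set p | Gam p.2 /\ FixSet (T p.2) p.1] ->
     (exists M : R, forall p, S p -> `|p.1| <= M /\ `|p.2| <= M) ->
     exists L0 : R, 0 < L0 /\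
       forall d p, Gam d -> S p ->
         `|Q d p.2 p.1 - Q p.2 p.2 p.1| <= L0 * `|d - p.2|) ->
  (* (2) *)
  {within [set p : V * R | Gam p.2], continuous (fun p : V * R => T p.2 p.1)} ->
  (* (3) *)
  (forall n, Gam (gam n)) -> Gam gstar -> Rlinear_cvg gam gstar ->
  (\sum_(0 <= n <oo) ((L (gam n.+1) (gam n) - 1)%:E) < +oo)%E ->
  (* iteration *)
  x 0%N = x0 ->
  (forall n, x n.+1 = Q (gam n.+1) (gam n) (T (gam n) (x n))) ->
  Rlinear_cvg (fun n => dist_set (x n) (FixSet (T (gam n)))) 0
  /\ exists z, FixSet (T gstar) z /\ Rlinear_cvg x z
               /\ Rlinear_cvg (fun n => T (gam n) (x n)) z.
Proof.
move=> _ _ _ beta_ge0 beta_lt1 contrT FixT0 reloc bound_reloc _ gamP Ggs gam_cvg sumL _ xS.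
have [q Fq] := FixT0 _ Ggs.
pose p n := Q (gam n) gstar q.
have pFix n : FixSet (T (gam n)) (p n) := relocator_fix reloc Ggs (gamP n) Fq.
have pS n : p n.+1 = Q (gam n.+1) (gam n) (p n).
  by case: reloc => _ _ comp _; rewrite /p comp.
have [M sumM] : exists M, forall n, \sum_(0 <= k < n) (L (gam k.+1) (gam k) - 1) <= M.
  apply: nneseries_partial_sums_bounded sumL => k.
  by rewrite subr_ge0 (relocator_const_ge1 reloc (gamP k) (gamP k.+1)).
set K := expR M * `|x 0%N - p 0%N|.
have K0 : 0 <= K by rewrite mulr_ge0 ?expR_ge0.
have err := relocated_iteration_error reloc beta_ge0 contrT gamP pFix pS xS sumM.
have p_cvg : Rlinear_cvg p q.
  case: (bound_reloc [set (q, gstar)]) => [_ -> //| |L0 [L0_gt0 L0P]].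
    by exists (Num.max `|q| `|gstar|) => _ -> /=; rewrite !le_max !lexx orbT.
  apply: (Rlinear_cvg_dominated (ltW L0_gt0) _ gam_cvg) => n.
  by have := L0P (gam n) (q, gstar) (gamP n) erefl; rewrite /= (relocator_id reloc Ggs Fq).
split.
  apply: (Rlinear_cvg_geometric K0 beta_ge0 beta_lt1) => n.
  have /andP[dist_ge0 dist_le] := dist_set_le (x n) (pFix n).
  by rewrite subr0 ger0_norm // (le_trans dist_le).
exists q; split=> //; split; first exact: (Rlinear_cvg_close K0 beta_ge0 beta_lt1 err).
apply: (Rlinear_cvg_close K0 beta_ge0 beta_lt1 _ p_cvg) => n.
rewrite -[in X in `|_ - X|](pFix n); apply: (le_trans (contrT _ (gamP n) _ _)).
by apply: (le_trans _ (err n)); rewrite ler_piMl // (ltW beta_lt1).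
Qed.
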